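(* Let $\mathbb{X}$ be a discrete group with identity $\circ$, and let $\mu$ be a finitely supported probability measure on $\mathbb{X}$ satisfying (A1) $\mu(xzx^{-1})=\mu(z)$ for all $x,z\in\mathbb{X}$ and (A2) $\mu(z)=\mu(z^{-1})$ for all $z\in\mathbb{X}$. Fix $z\in\mathbb{X}$ and $n\in\mathbb{N}$. There exists a function $\phi\colon\mathbb{X}^n\times[n+1]\to\mathbb{X}^{n+1}$ such that for all $(w,i)\in\mathbb{X}^n\times[n+1]$: (i) $\mathrm{val}(\phi(w,i))=\mathrm{val}(w)z$; (ii) $\mu^{\otimes(n+1)}(\phi(w,i))=\mu^{\otimes n}(w)\mu(z)$; (iii) $|\phi^{-1}(\phi(w,i))|=1+\ell_z(w)$; (iv) a sequence $\eta\in\mathbb{X}^{n+1}$ is in the image of $\phi$ if and only if $\ell_z(\eta)\neq 0$.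
   Context: $[m]=\{1,\ldots,m\}$. For a sequence $w=(w_1,\ldots,w_m)\in\mathbb{X}^m$: $\mathrm{val}(w):=w_1w_2\cdots w_m$ (the empty product being $\circ$), $\mu^{\otimes m}(w):=\prod_{j=1}^m\mu(w_j)$, and $\ell_z(w):=\sum_{j=1}^m\mathbf{1}\{w_j=(w_{j+1}\cdots w_m)\,z\,(w_{j+1}\cdots w_m)^{-1}\}$, where for $j=m$ the product $w_{j+1}\cdots w_m$ is $\circ$. *)

(* a (possibly infinite) discrete group is a [groupType]
   from mathcomp/boot/monoid.v; measures are real-valued on R : realType. *)
From HB Require Import structures.
From mathcomp Require Import all_boot all_order all_algebra.
From mathcomp Require Import monoid.
From mathcomp Require Import reals.
Set Implicit Arguments. Unset Strict Implicit. Unset Printing Implicit Defensive.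
Import Order.TTheory GRing.Theory Num.Theory.

Section Defs.
Variable X : groupType.

Definition valw (w : seq X) : X := foldr (fun a b => (a * b)%g) 1%g w.

(* ell_z(w) = #{ j in [m] : w_j = (w_{j+1}...w_m) z (w_{j+1}...w_m)^-1 }
   (indices here are 0-based: position j of the seq is w_{j+1}) *)
Definition ellz (z : X) (w : seq X) : nat :=
  \sum_(j < size w)
     (nth 1%g w j == (valw (drop j.+1 w) * z * (valw (drop j.+1 w))^-1)%g : nat).

Variable R : realType.

Definition mu_prod (mu : X -> R) (w : seq X) : R := \prod_(x <- w) mu x.

Definition fin_supp_prob (mu : X -> R) : Prop :=
  (forall x, 0 <= mu x)%R /\
  exists s : seq X, [/\ uniq s, (forall x, mu x != 0%R -> x \in s)
                   & (\sum_(x <- s) mu x = 1)%R].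
End Defs.

From HB Require Import structures.
From mathcomp Require Import all_boot all_order all_algebra.
From mathcomp Require Import monoid.
From mathcomp Require Import reals.

Set Implicit Arguments. Unset Strict Implicit. Unset Printing Implicit Defensive.
Import GRing.Theory.

(* Insert, at position i of w, the conjugate of z by the suffix product
   S = w_(i+1) ... w_n.  Since (S z S^-1) S = S z, the value of the word is
   multiplied by z, and conjugation invariance of mu multiplies its weight by
   mu z.  The inserted
   letter is a z-mark, i.e. a position counted by ell_z.  Marks of w survive:
   suffix products to the left of i gain a right factor z, which does not
   change the conjugate of z they define.  Conversely, deleting any marked
   letter of eta undoes an insertion, so the fibre of eta is indexed by its
   marks; there are ell_z(eta) of them, and 1 + ell_z(w) when eta = phi(w, i). *)

Section Insertion.
Variable X : groupType.
Variable z : X.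

Definition zconj (S : X) : X := (S * z * S^-1)%g.

Definition zmark (w : seq X) (j : nat) : bool :=
  nth 1%g w j == zconj (valw (drop j.+1 w)).

Definition insz (w : seq X) (i : nat) : seq X :=
  take i w ++ zconj (valw (drop i w)) :: drop i w.

Definition delz (w : seq X) (j : nat) : seq X := take j w ++ drop j.+1 w.

Lemma valw_cat (s t : seq X) : valw (s ++ t) = (valw s * valw t)%g.
Proof. by elim: s => [|a s IH] /=; rewrite ?mul1g // IH mulgA. Qed.

Lemma zconjMz S : zconj (S * z)%g = zconj S.
Proof. by rewrite /zconj invgM !mulgA mulgK. Qed.

Lemma ellzE w : ellz z w = count (zmark w) (iota 0 (size w)).
Proof.
rewrite /ellz -(big_mkord xpredT (fun j => zmark w j : nat)).
rewrite /index_iota subn0 -sum1_count [RHS]big_mkcond.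
by apply: eq_bigr => j _; case: zmark.
Qed.

Lemma ellz_cons a w : ellz z (a :: w) = (a == zconj (valw w)) + ellz z w.
Proof. by rewrite /ellz big_ord_recl /= drop0. Qed.

Lemma insz0 w : insz w 0 = zconj (valw w) :: w.
Proof. by rewrite /insz take0 drop0. Qed.

Lemma insz_cons a w i : insz (a :: w) i.+1 = a :: insz w i.
Proof. by []. Qed.

Lemma size_insz w i : size (insz w i) = (size w).+1.
Proof. by rewrite /insz size_cat /= addnS -size_cat cat_take_drop. Qed.

Lemma valw_insz w i : valw (insz w i) = (valw w * z)%g.
Proof.
by rewrite /insz valw_cat /= /zconj mulgVK mulgA -valw_cat cat_take_drop.
Qed.

Lemma mu_prod_insz (R : realType) (f : X -> R) w i :
  (forall x y : X, f (x * y * x^-1)%g = f y) ->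
  mu_prod f (insz w i) = (mu_prod f w * f z)%R.
Proof.
move=> f_class; rewrite /mu_prod -[in RHS](cat_take_drop i w) !big_cat big_cons.
by rewrite f_class /= mulrCA mulrC.
Qed.

Lemma ellz_insz w i : ellz z (insz w i) = (ellz z w).+1.
Proof.
elim: w i => [|a w IH] [|i]; rewrite ?insz0 ellz_cons ?eqxx //.
by rewrite insz_cons ellz_cons IH valw_insz zconjMz addnS.
Qed.

Lemma zmark_insz w i : i <= size w -> zmark (insz w i) i.
Proof.
move=> le_iw; have size_take_i : size (take i w) = i by rewrite size_takel.
rewrite /zmark /insz nth_cat size_take_i ltnn subnn /=.
by rewrite -addn1 drop_cat size_take_i ltnNge leq_addr /= addKn drop1.
Qed.

Lemma inszK w i : i <= size w -> delz (insz w i) i = w.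
Proof.
move=> le_iw; have size_take_i : size (take i w) = i by rewrite size_takel.
rewrite /delz /insz take_size_cat // -addn1 drop_cat size_take_i.
by rewrite ltnNge leq_addr /= addKn drop1 cat_take_drop.
Qed.

Lemma delzK w j : j < size w -> zmark w j -> insz (delz w j) j = w.
Proof.
move=> lt_jw /eqP mark_j; have size_take_j : size (take j w) = j.
  by rewrite size_takel // ltnW.
rewrite /insz /delz take_size_cat // drop_size_cat // -mark_j.
by rewrite -drop_nth // cat_take_drop.
Qed.

Section Tuples.
Variable n : nat.

Lemma insz_tupleP (w : n.-tuple X) i : size (insz w i) == n.+1.
Proof. by rewrite size_insz size_tuple. Qed.

Definition insz_tuple (w : n.-tuple X) i : n.+1.-tuple X := Tuple (insz_tupleP w i).

Lemma delz_tupleP (w : n.+1.-tuple X) (j : 'I_n.+1) : size (delz w j) == n.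
Proof.
have le_jw : j <= size w by rewrite size_tuple ltnW.
by rewrite size_cat size_takel // size_drop size_tuple subSS subnKC // -ltnS.
Qed.

Definition delz_tuple (w : n.+1.-tuple X) (j : 'I_n.+1) : n.-tuple X :=
  Tuple (delz_tupleP w j).

Lemma insz_tuple_eq (w : n.-tuple X) (i : 'I_n.+1) eta :
  insz_tuple w i = eta <-> zmark eta i /\ w = delz_tuple eta i.
Proof.
split=> [<- | [mark_i ->]]; last by apply: val_inj; rewrite /= delzK ?size_tuple.
have le_in : i <= size w by rewrite size_tuple -ltnS.
by split; [apply: zmark_insz | apply: val_inj; rewrite /= inszK].
Qed.

Lemma ellz_tuple (eta : n.+1.-tuple X) :
  ellz z eta = count (fun j : 'I_n.+1 => zmark eta j) (enum 'I_n.+1).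
Proof. by rewrite ellzE size_tuple -val_enum_ord count_map. Qed.

Definition insz_preimage (eta : n.+1.-tuple X) : seq (n.-tuple X * 'I_n.+1) :=
  [seq (delz_tuple eta j, j) | j <- [seq j : 'I_n.+1 <- enum 'I_n.+1 | zmark eta j]].

Lemma uniq_insz_preimage eta : uniq (insz_preimage eta).
Proof.
by rewrite map_inj_uniq ?(filter_uniq _ (enum_uniq _)) // => j1 j2 [].
Qed.

Lemma size_insz_preimage eta : size (insz_preimage eta) = ellz z eta.
Proof. by rewrite size_map size_filter ellz_tuple. Qed.

Lemma mem_insz_preimage eta p :
  p \in insz_preimage eta <-> insz_tuple p.1 p.2 = eta.
Proof.
case: p => w j /=; split.
  case/mapP=> k; rewrite mem_filter => /andP[mark_k _] [-> ->].
  by apply/insz_tuple_eq.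
case/insz_tuple_eq=> mark_j ->; apply/mapP; exists j => //.
by rewrite mem_filter mark_j mem_enum.
Qed.

End Tuples.

End Insertion.

Theorem lemma1 (X : groupType) (R : realType) (mu : X -> R)
  (Hmu : fin_supp_prob mu)
  (A1 : forall x z : X, mu (x * z * x^-1)%g = mu z)
  (A2 : forall z : X, mu (z^-1)%g = mu z)
  (z : X) (n : nat) :
  exists phi : n.-tuple X * 'I_n.+1 -> n.+1.-tuple X,
    [/\ (forall (w : n.-tuple X) (i : 'I_n.+1), valw (phi (w, i)) = (valw w * z)%g),
        (forall (w : n.-tuple X) (i : 'I_n.+1), mu_prod mu (phi (w, i)) = (mu_prod mu w * mu z)%R),
        (forall (w : n.-tuple X) (i : 'I_n.+1), exists s : seq (n.-tuple X * 'I_n.+1),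
            [/\ uniq s, size s = (1 + ellz z w)%N &
                forall p, p \in s <-> phi p = phi (w, i)])
      & (forall eta : n.+1.-tuple X,
            (exists p, phi p = eta) <-> ellz z eta <> 0%N)].
Proof.
exists (fun p : n.-tuple X * 'I_n.+1 => insz_tuple z p.1 p.2); split.
- by move=> w i; apply: valw_insz.
- by move=> w i; apply: mu_prod_insz.
- move=> w i; exists (insz_preimage z (insz_tuple z w i)); split.
  + exact: uniq_insz_preimage.
  + by rewrite size_insz_preimage ellz_insz.
  + exact: mem_insz_preimage.
- move=> eta; split=> [[[w i] <-] | ]; first by rewrite ellz_insz.
  rewrite ellz_tuple => /eqP; rewrite -lt0n -has_count => /hasP[j _ mark_j].
  by exists (delz_tuple eta j, j); apply/insz_tuple_eq.
Qed.
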